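(* Let $P$ be a multiprogram in which at most one thread per process calls deliver, and let $\widehat C$ be a finite computation of $\mathrm{TS}(P)$ satisfying $\mathrm{NW}$. Then for all processes $\widehat p,\widehat r$, the writes performed by $\widehat p$ to its variable $T[\widehat r]$, taken in program order, write strictly increasing values.
   Context: $\mathrm{NW}$ (message-passing network model): processes communicate by $\mathrm{send}(s,d,m)$/$\mathrm{recv}(s,d,m)$ of uniquely identified messages; messages from a given sender to a given receiver are received in the order sent (FIFO channels), each message is received at most once and only after being sent; threads within a process share local variables whose accesses are sequentially consistent. Formally $\mathrm{NW}(C)$ holds iff for each process there is a valid total order of its operations extending $\to_{\mathrm{HappensBefore}}$, the transitive closure of program order, send-before-receive, FIFO-channel order (receives of $m,m'$ from $s$ to $d$ ordered as the sends), and writes-into order on local variables; and messages are received iff sent. The timestamp transformation $\mathrm{TS}$. Each process $\widehat p$ has: integer local-counter (initially 0); arrays $\mathrm{counter}[\cdot]$ and $T[\cdot]$ indexed by processes, initially 0; a priority queue $\mathrm{priorityQ}[l]$ for each label $l\in L$ ordered by (timestamp, source) lexicographically; a FIFO queue $\mathrm{fifoQ}[\widehat q]$ for each process $\widehat q$. Queue elements are $[u,ts,c,src]$. $\mathrm{bcast}(u,l)$ ($l\in L\cup\{\bot\}$): send $[\mathrm{LBR},u,l]$ to $\widehat p$ itself. ProcessQueueElement$(qe,l,s)$: enqueue $qe$ into $\mathrm{priorityQ}[l]$ if $l\neq\bot$, else into $\mathrm{fifoQ}[s]$. HandleMessage: receive a message from some $\widehat s$; if $[\mathrm{LBR},u,l]$: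 $T[\widehat p]\gets T[\widehat p]+1$, local-counter $\gets$ local-counter$+1$, $qe\gets[u,T[\widehat p],\text{local-counter},\widehat p]$, ProcessQueueElement$(qe,l,\widehat p)$, send $[\mathrm{ORD},l,qe]$ to every other process; if $[\mathrm{TSUPD},t,\widehat q]$: $T[\widehat q]\gets t$; if $[\mathrm{ORD},l,qe]$: $T[\widehat s]\gets qe.ts$, ProcessQueueElement$(qe,l,\widehat s)$, and if $qe.ts>T[\widehat p]$ then $T[\widehat p]\gets qe.ts$ and send $[\mathrm{TSUPD},T[\widehat p],\widehat p]$ to every other process. CanExtract$(\mathrm{priorityQ}[l])$ holds iff the queue is nonempty and its minimum $qe$ satisfies $qe.c=\mathrm{counter}[qe.src]+1$ and $qe.ts\le T[\widehat q]$ for all $\widehat q$. CanDequeue$(\mathrm{fifoQ}[\widehat q])$ holds iff nonempty and its head $qe$ satisfies $qe.c=\mathrm{counter}[qe.src]+1$. deliver: while no priority queue satisfies CanExtract and no FIFO queue satisfies CanDequeue, call HandleMessage; then remove an element $qe$ from such a queue (extractmin, or FIFO dequeue), set $\mathrm{counter}[qe.src]\gets qe.c$, and return $qe.u$ with its label ($\bot$ for FIFO). Reads/writes of the original program are mapped to themselves. The only writes to $T[\cdot]$ are those listed above. *)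

(* Operational model of the TS transformation
   running on an NW (FIFO message-passing) network. *)
From mathcomp Require Import all_boot.
Set Implicit Arguments.
Unset Strict Implicit.
Unset Printing Implicit Defensive.

Section TS.
(* n processes 'I_n; U = type of broadcast payloads u; L = set of labels,
   [option L] = L ∪ {⊥} with None = ⊥. *)
Variables (n : nat) (U : Type) (L : eqType).

Record qelt := QElt { qu : U; qts : nat; qc : nat; qsrc : 'I_n }.

Inductive msg :=
| LBR of U & option L
| TSUPD of nat & 'I_n
| ORD of option L & qelt.

Record lstate := LState {
  lcounter : nat;
  counter : 'I_n -> nat;
  T : 'I_n -> nat;
  priorityQ : L -> seq qelt;       (* priorityQ[l] (min extracted by key) *)
  fifoQ : 'I_n -> seq qelt;        (* fifoQ[q] (head = first element) *)
  in_deliver : bool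
}.

(* global state: local states + FIFO channels chan s d (head = oldest) *)
Record gstate := GState { loc : 'I_n -> lstate; chan : 'I_n -> 'I_n -> seq msg }.

Definition upd (A : eqType) (B : Type) (f : A -> B) (a : A) (b : B) : A -> B :=
  fun x => if x == a then b else f x.

Definition set_T (st : lstate) (q : 'I_n) (v : nat) : lstate :=
  LState (lcounter st) (counter st) (upd (T st) q v) (priorityQ st) (fifoQ st) (in_deliver st).
Definition set_lc (st : lstate) (v : nat) : lstate :=
  LState v (counter st) (T st) (priorityQ st) (fifoQ st) (in_deliver st).
Definition set_pq (st : lstate) (l : L) (s : seq qelt) : lstate :=
  LState (lcounter st) (counter st) (T st) (upd (priorityQ st) l s) (fifoQ st) (in_deliver st).
Definition set_fq (st : lstate) (q : 'I_n) (s : seq qelt) : lstate :=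
  LState (lcounter st) (counter st) (T st) (priorityQ st) (upd (fifoQ st) q s) (in_deliver st).
Definition set_deliver (st : lstate) (b : bool) : lstate :=
  LState (lcounter st) (counter st) (T st) (priorityQ st) (fifoQ st) b.
Definition set_counter (st : lstate) (q : 'I_n) (v : nat) : lstate :=
  LState (lcounter st) (upd (counter st) q v) (T st) (priorityQ st) (fifoQ st) (in_deliver st).

Definition init_l : lstate :=
  LState 0 (fun _ => 0) (fun _ => 0) (fun _ => [::]) (fun _ => [::]) false.
Definition init : gstate := GState (fun _ => init_l) (fun _ _ => [::]).

Definition chans := 'I_n -> 'I_n -> seq msg.

Definition send (p d : 'I_n) (m : msg) (ch : chans) : chans :=
  fun s d' => if (s == p) && (d' == d) then rcons (ch s d') m else ch s d'.
Definition send_others (p : 'I_n) (m : msg) (ch : chans) : chans :=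
  fun s d => if (s == p) && (d != p) then rcons (ch s d) m else ch s d.
Definition set_chan (s d : 'I_n) (c : seq msg) (ch : chans) : chans :=
  fun s' d' => if (s' == s) && (d' == d) then c else ch s' d'.

Definition ProcessQueueElement (st : lstate) (qe : qelt) (l : option L) (s : 'I_n)
  : lstate :=
  match l with
  | Some l' => set_pq st l' (rcons (priorityQ st l') qe)
  | None => set_fq st s (rcons (fifoQ st s) qe)
  end.

(* A write by process p to its variable T[r] with value v: (p, r, v). *)
Definition write := ('I_n * 'I_n * nat)%type.

Definition HandleMessage (p s : 'I_n) (m : msg) (st : lstate) (ch : chans)
  : lstate * chans * seq write :=
  match m with
  | LBR u l =>
      let t := (T st p).+1 in
      let lc := (lcounter st).+1 in
      let qe := QElt u t lc p in
      let st2 := ProcessQueueElement (set_lc (set_T st p t) lc) qe l p in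
      (st2, send_others p (ORD l qe) ch, [:: (p, p, t)])
  | TSUPD t q => (set_T st q t, ch, [:: (p, q, t)])
  | ORD l qe =>
      let st2 := ProcessQueueElement (set_T st s (qts qe)) qe l s in
      if T st2 p < qts qe then
        (set_T st2 p (qts qe), send_others p (TSUPD (qts qe) p) ch,
         [:: (p, s, qts qe); (p, p, qts qe)])
      else (st2, ch, [:: (p, s, qts qe)])
  end.

Definition key_le (a b : qelt) : bool :=
  (qts a < qts b) || ((qts a == qts b) && (qsrc a <= qsrc b)).

Definition CanExtractAt (st : lstate) (l : L) (qe : qelt) (s1 s2 : seq qelt) : Prop :=
  [/\ priorityQ st l = s1 ++ qe :: s2,
      all (key_le qe) (s1 ++ s2),
      qc qe = (counter st (qsrc qe)).+1
    & forall q, qts qe <= T st q].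

Definition CanDequeueAt (st : lstate) (q : 'I_n) (qe : qelt) (rest : seq qelt) : Prop :=
  fifoQ st q = qe :: rest /\ qc qe = (counter st (qsrc qe)).+1.

Definition SomeReady (st : lstate) : Prop :=
  (exists l qe s1 s2, CanExtractAt st l qe s1 s2) \/
  (exists q qe rest, CanDequeueAt st q qe rest).

Definition finish_deliver (st : lstate) (qe : qelt) : lstate :=
  set_deliver (set_counter st (qsrc qe) (qc qe)) false.

(* One atomic step of the system TS(P) (application steps that do not touch
   the TS variables or the network are stuttering and omitted). *)
Inductive step : gstate -> seq write -> gstate -> Prop :=
| StBcast g p u l :
    step g [::] (GState (loc g) (send p p (LBR u l) (chan g)))
| StCallDeliver g p :
    ~~ in_deliver (loc g p) ->
    step g [::] (GState (upd (loc g) p (set_deliver (loc g p) true)) (chan g))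
| StHandle g p s m rest :
    in_deliver (loc g p) ->
    ~ SomeReady (loc g p) ->
    chan g s p = m :: rest ->
    let h := HandleMessage p s m (loc g p) (set_chan s p rest (chan g)) in
    step g h.2 (GState (upd (loc g) p h.1.1) h.1.2)
| StExtract g p l qe s1 s2 :
    in_deliver (loc g p) ->
    CanExtractAt (loc g p) l qe s1 s2 ->
    step g [::] (GState (upd (loc g) p
                   (finish_deliver (set_pq (loc g p) l (s1 ++ s2)) qe)) (chan g))
| StDequeue g p q qe rest :
    in_deliver (loc g p) ->
    CanDequeueAt (loc g p) q qe rest ->
    step g [::] (GState (upd (loc g) p
                   (finish_deliver (set_fq (loc g p) q rest) qe)) (chan g)).

Inductive reach : gstate -> seq write -> Prop :=
| Reach0 : reach init [::]
| ReachS g w g' w' : reach g w -> step g w' g' -> reach g' (w ++ w').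

End TS.

(* A process p writes T[r] either when it receives a timestamp from r (an ORD or
   TSUPD message on the channel r -> p), or when it raises its own T[p].  Raises
   are strict, and every value of T[r] that r sends is the value it has just
   written.  Hence, by FIFO order, the timestamps in transit on a channel a -> b
   are strictly increasing, all above b's copy of T[a] and at most a's own T[a];
   so every receipt strictly increases the receiver's copy, and every write by p
   to T[r] exceeds the previous one. *)
From mathcomp Require Import all_boot.
Set Implicit Arguments.
Unset Strict Implicit.
Unset Printing Implicit Defensive.

Section Timestamps.
Variables (n : nat) (U : Type) (L : eqType).
Local Notation gst := (gstate n U L).
Local Notation msgT := (msg n U L).
Local Notation chansT := (chans n U L).

Definition view (g : gst) (a b : 'I_n) : nat := T (loc g a) b.

Definition stamp (m : msgT) : option nat :=
  match m with LBR _ _ => None | TSUPD t _ => Some t | ORD _ qe => Some (qts qe) end.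

Definition stamps (c : seq msgT) : seq nat := pmap stamp c.

Definition wf_msg (s d : 'I_n) (m : msgT) : bool :=
  match m with
  | LBR _ _ => s == d
  | TSUPD _ q => (q == s) && (s != d)
  | ORD _ _ => s != d
  end.

Definition wf_chans (ch : chansT) : Prop := forall s d, all (wf_msg s d) (ch s d).

Definition in_flight_ordered (V : 'I_n -> 'I_n -> nat) (ch : chansT) : Prop :=
  forall a b, a != b ->
    path ltn (V b a) (stamps (ch a b)) && (last (V b a) (stamps (ch a b)) <= V a a).

Definition writes (w : seq (write n)) (p r : 'I_n) : seq nat :=
  [seq x.2 | x <- w & (x.1.1 == p) && (x.1.2 == r)].

Definition writes_ascend (V : 'I_n -> 'I_n -> nat) (w : seq (write n))
    (V' : 'I_n -> 'I_n -> nat) : Prop :=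
  forall p r, path ltn (V p r) (writes w p r) /\ last (V p r) (writes w p r) = V' p r.

Lemma stamps_rcons c m t : stamp m = Some t -> stamps (rcons c m) = rcons (stamps c) t.
Proof. by move=> Hm; rewrite /stamps -cats1 pmap_cat /= Hm cats1. Qed.

Lemma stamps_cons c m t : stamp m = Some t -> stamps (m :: c) = t :: stamps c.
Proof. by move=> Hm; rewrite /stamps /= Hm. Qed.

Lemma T_ProcessQueueElement (st : lstate n U L) qe l s :
  T (ProcessQueueElement st qe l s) = T st.
Proof. by case: l. Qed.

Lemma view_upd (g : gst) p st ch :
  view (GState (upd (loc g) p st) ch) =2 upd (view g) p (T st).
Proof. by move=> a b; rewrite /view /upd /=; case: eqP. Qed.

Lemma view_upd_sameT (g : gst) p st ch :
  T st = T (loc g p) -> view (GState (upd (loc g) p st) ch) =2 view g.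
Proof. by move=> HT a b; rewrite view_upd /upd; case: eqP => [->|]; rewrite ?HT. Qed.

Lemma wf_chans_send (ch : chansT) p d m :
  wf_chans ch -> wf_msg p d m -> wf_chans (send p d m ch).
Proof.
move=> Hwf Hm a b; rewrite /send; case: ifP => // /andP[/eqP -> /eqP ->].
by rewrite all_rcons Hm Hwf.
Qed.

Lemma wf_chans_set_chan (ch : chansT) s p m rest :
  wf_chans ch -> ch s p = m :: rest -> wf_chans (set_chan s p rest ch).
Proof.
move=> Hwf Hsp a b; rewrite /set_chan; case: ifP => [/andP[/eqP -> /eqP ->]|_] //.
by move: (Hwf s p); rewrite Hsp /= => /andP[].
Qed.

Lemma wf_chans_send_others (ch : chansT) p M :
  wf_chans ch -> (forall d, d != p -> wf_msg p d M) -> wf_chans (send_others p M ch).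
Proof.
move=> Hwf HM a b; rewrite /send_others; case: ifP => [/andP[/eqP -> nbp]|_] //.
by rewrite all_rcons HM // Hwf.
Qed.

Lemma in_flight_ordered_eq V V' ch :
  V =2 V' -> in_flight_ordered V ch -> in_flight_ordered V' ch.
Proof. by move=> E Hord a b ab; rewrite -!E; exact: Hord. Qed.

Lemma in_flight_ordered_send_self V ch p m :
  in_flight_ordered V ch -> in_flight_ordered V (send p p m ch).
Proof.
move=> Hord a b ab; rewrite /send; case: ifP => [/andP[/eqP Eap /eqP Ebp]|_].
  by move: ab; rewrite Eap Ebp eqxx.
exact: Hord.
Qed.

Lemma in_flight_ordered_set_self V ch p c :
  in_flight_ordered V ch -> in_flight_ordered V (set_chan p p c ch).
Proof.
move=> Hord a b ab; rewrite /set_chan; case: ifP => [/andP[/eqP Eap /eqP Ebp]|_].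
  by move: ab; rewrite Eap Ebp eqxx.
exact: Hord.
Qed.

Lemma in_flight_head_fresh V ch s p m rest t :
  s != p -> in_flight_ordered V ch -> ch s p = m :: rest -> stamp m = Some t -> V p s < t.
Proof.
by move=> sp Hord Hsp Hm; move: (Hord s p sp); rewrite Hsp (stamps_cons _ Hm) => /andP[/andP[]].
Qed.

Lemma in_flight_ordered_receive V ch s p m rest t :
  s != p -> in_flight_ordered V ch -> ch s p = m :: rest -> stamp m = Some t ->
  in_flight_ordered (upd V p (upd (V p) s t)) (set_chan s p rest ch).
Proof.
move=> sp Hord Hsp Hm a b ab; have Hab := Hord a b ab; rewrite /set_chan /upd.
case: (eqVneq a s) => [Eas|nas]; case: (eqVneq b p) => [Ebp|nbp] /=.
- move: Hab; rewrite Eas Ebp Hsp (stamps_cons _ Hm) !eqxx (negbTE sp) /=.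
  by case/andP=> /andP[_ Hpath] Hlast; apply/andP; split.
- by move: Hab; rewrite Eas (negbTE sp).
- by move: ab Hab; rewrite Ebp (negbTE nas) => /negbTE ->.
- by case: eqP => [Eap|_] //=; rewrite (negbTE nas) -Eap.
Qed.

Lemma in_flight_ordered_raise V ch p M v :
  in_flight_ordered V ch -> V p p < v -> stamp M = Some v ->
  in_flight_ordered (upd V p (upd (V p) p v)) (send_others p M ch).
Proof.
move=> Hord Hv HM a b ab; rewrite /send_others /upd.
case: (eqVneq a p) => [Eap|ap] /=.
- subst a; have bp : b != p by rewrite eq_sym.
  rewrite bp (negbTE bp) eqxx (stamps_rcons _ HM) rcons_path last_rcons leqnn andbT.
  by case/andP: (Hord p b ab) => -> Hl; exact: leq_ltn_trans Hl Hv.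
- case: (eqVneq b p) => [Ebp|_]; last exact: Hord _ _ ab.
  by subst b; rewrite (negbTE ap); exact: Hord _ _ ab.
Qed.

Lemma writes_cat w w' p r : writes (w ++ w') p r = writes w p r ++ writes w' p r.
Proof. by rewrite /writes filter_cat map_cat. Qed.

Lemma writes_ascend_nil V V' : V =2 V' -> writes_ascend V [::] V'.
Proof. by move=> E p r; split; rewrite //= E. Qed.

Lemma writes_ascend_eq V V' V'' w :
  V' =2 V'' -> writes_ascend V w V' -> writes_ascend V w V''.
Proof. by move=> E Hw p r; rewrite -E; exact: Hw. Qed.

Lemma writes_ascend_cat V1 V2 V3 w1 w2 :
  writes_ascend V1 w1 V2 -> writes_ascend V2 w2 V3 -> writes_ascend V1 (w1 ++ w2) V3.
Proof.
move=> H1 H2 p r; case: (H1 p r) (H2 p r) => P1 L1 [P2 L2].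
by rewrite writes_cat cat_path last_cat P1 L1 P2 L2.
Qed.

Lemma writes_ascend_by V p Tp w :
  all (fun x : write n => x.1.1 == p) w ->
  (forall r, path ltn (V p r) (writes w p r) /\ last (V p r) (writes w p r) = Tp r) ->
  writes_ascend V w (upd V p Tp).
Proof.
move=> Hby Hp a r; rewrite /upd; case: eqP => [->|/eqP ap]; first exact: Hp.
rewrite /writes; suff -> : [seq x <- w | (x.1.1 == a) && (x.1.2 == r)] = [::] by [].
apply/eqP; rewrite -[_ == _]negbK -has_filter; apply/hasPn => x /(allP Hby) /eqP ->.
by rewrite eq_sym (negbTE ap).
Qed.

Lemma writes_ascend_single V p r v :
  V p r < v -> writes_ascend V [:: (p, r, v)] (upd V p (upd (V p) r v)).
Proof.
move=> Hv; apply: writes_ascend_by; first by rewrite /= eqxx.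
move=> r'; rewrite /writes /= eqxx /upd.
by case: (eqVneq r' r) => [->|] //=; rewrite Hv.
Qed.

Definition ts_inv (g : gst) : Prop := wf_chans (chan g) /\ in_flight_ordered (view g) (chan g).

Definition ts_inv_step (g : gst) (w : seq (write n)) (g' : gst) : Prop :=
  ts_inv g' /\ writes_ascend (view g) w (view g').

Lemma ts_inv_update (g : gst) p st' ch' w V' :
  upd (view g) p (T st') =2 V' ->
  wf_chans ch' -> in_flight_ordered V' ch' -> writes_ascend (view g) w V' ->
  ts_inv_step g w (GState (upd (loc g) p st') ch').
Proof.
move=> E Hwf Hord Hw; have E' : V' =2 view (GState (upd (loc g) p st') ch').
  by move=> a b; rewrite view_upd E.
split; first split=> //; [exact: in_flight_ordered_eq Hord | exact: writes_ascend_eq Hw].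
Qed.

Lemma ts_inv_update_sameT (g : gst) p st' :
  T st' = T (loc g p) -> ts_inv g -> ts_inv_step g [::] (GState (upd (loc g) p st') (chan g)).
Proof.
move=> HT [Hwf Hord]; have E := view_upd_sameT (chan g) HT.
split; first split=> //; first exact: in_flight_ordered_eq Hord.
by apply: writes_ascend_nil => a b; rewrite E.
Qed.

Section Handle.
Variables (g : gst) (p s : 'I_n) (rest : seq msgT).
Hypothesis Hinv : ts_inv g.

Lemma handle_LBR_inv u l :
  chan g s p = LBR n u l :: rest ->
  let h := HandleMessage p s (LBR n u l) (loc g p) (set_chan s p rest (chan g)) in
  ts_inv_step g h.2 (GState (upd (loc g) p h.1.1) h.1.2).
Proof.
case: Hinv => Hwf Hord Hsp.
have /eqP Esp : s == p by move: (Hwf s p); rewrite Hsp => /andP[].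
subst s; apply: (ts_inv_update (V' := upd (view g) p (upd (view g p) p (view g p p).+1))).
- by move=> a b; rewrite /= T_ProcessQueueElement.
- apply: wf_chans_send_others; first exact: wf_chans_set_chan Hsp.
  by move=> d /=; rewrite eq_sym.
- apply: in_flight_ordered_raise (ltnSn _) _ => //; exact: in_flight_ordered_set_self.
- exact: writes_ascend_single (ltnSn _).
Qed.

Lemma handle_TSUPD_inv t q :
  chan g s p = TSUPD U L t q :: rest ->
  let h := HandleMessage p s (TSUPD U L t q) (loc g p) (set_chan s p rest (chan g)) in
  ts_inv_step g h.2 (GState (upd (loc g) p h.1.1) h.1.2).
Proof.
case: Hinv => Hwf Hord Hsp.
have /andP[/eqP Eqs sp] : (q == s) && (s != p) by move: (Hwf s p); rewrite Hsp => /andP[].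
subst q; apply: (ts_inv_update (V' := upd (view g) p (upd (view g p) s t))) => //.
- exact: wf_chans_set_chan Hsp.
- exact: in_flight_ordered_receive sp Hord Hsp _.
- exact: writes_ascend_single (in_flight_head_fresh sp Hord Hsp _).
Qed.

Lemma handle_ORD_inv l qe :
  chan g s p = ORD l qe :: rest ->
  let h := HandleMessage p s (ORD l qe) (loc g p) (set_chan s p rest (chan g)) in
  ts_inv_step g h.2 (GState (upd (loc g) p h.1.1) h.1.2).
Proof.
case: Hinv => Hwf Hord Hsp.
have sp : s != p by move: (Hwf s p); rewrite Hsp => /andP[].
have Hrecv := in_flight_ordered_receive sp Hord Hsp (erefl (Some (qts qe))).
have Hfresh := in_flight_head_fresh sp Hord Hsp (erefl (Some (qts qe))).
have Hwf' := wf_chans_set_chan Hwf Hsp.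
set V1 := upd (view g) p (upd (view g p) s (qts qe)) in Hrecv.
have V1pp : V1 p p = view g p p by rewrite /V1 /upd !eqxx eq_sym (negbTE sp).
have Tpp : T (ProcessQueueElement (set_T (loc g p) s (qts qe)) qe l s) p = view g p p.
  by rewrite T_ProcessQueueElement /= /upd eq_sym (negbTE sp).
rewrite /= Tpp; case: ifP => Hraise /=.
- apply: (ts_inv_update (V' := upd V1 p (upd (V1 p) p (qts qe)))).
  + by move=> a b; rewrite /V1 /upd /= T_ProcessQueueElement /upd eqxx; case: eqP.
  + by apply: wf_chans_send_others => // d; rewrite /= eqxx eq_sym.
  + by apply: in_flight_ordered_raise Hrecv _ _; rewrite // V1pp.
  + apply: (writes_ascend_cat (writes_ascend_single Hfresh)).
    by apply: writes_ascend_single; rewrite -/V1 V1pp.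
- apply: (ts_inv_update (V' := V1)) => //.
  + by move=> a b; rewrite T_ProcessQueueElement.
  + exact: writes_ascend_single Hfresh.
Qed.

End Handle.

Lemma step_inv (g : gst) w g' :
  step g w g' -> ts_inv g -> ts_inv_step g w g'.
Proof.
case=> {g w g'}.
- move=> g p u l [Hwf Hord]; split; first split.
  + by apply: wf_chans_send Hwf _ => /=.
  + exact: in_flight_ordered_send_self.
  + exact: writes_ascend_nil.
- by move=> g p _; apply: ts_inv_update_sameT.
- move=> g p s [u l|t q|l qe] rest _ _ Hsp h Hinv.
  + exact (handle_LBR_inv Hinv Hsp).
  + exact (handle_TSUPD_inv Hinv Hsp).
  + exact (handle_ORD_inv Hinv Hsp).
- by move=> g p l qe s1 s2 _ _; apply: ts_inv_update_sameT.
- by move=> g p q qe rest _ _; apply: ts_inv_update_sameT.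
Qed.

Lemma reach_inv (g : gst) w :
  reach g w -> ts_inv g /\ writes_ascend (fun _ _ => 0) w (view g).
Proof.
elim=> {g w} [|g w g' w' _ [Hinv Hw] Hstep].
  by split=> //; exact: writes_ascend_nil.
have [Hinv' Hw'] := step_inv Hstep Hinv.
by split; last exact: writes_ascend_cat Hw Hw'.
Qed.

End Timestamps.

Theorem mainTheorem5 (n : nat) (U : Type) (L : eqType)
    (g : gstate n U L) (w : seq (write n)) :
  reach g w ->
  (forall s d : 'I_n, chan g s d = [::]) ->
  forall p r : 'I_n,
    sorted ltn [seq x.2 | x <- w & (x.1.1 == p) && (x.1.2 == r)].
Proof.
move=> Hreach _ p r; have [_ Hw] := reach_inv Hreach.
by case: (Hw p r) => Hpath _; exact: path_sorted Hpath.
Qed.
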